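(* For all integers $m\ge 2$ and $f$ with $0\le f\le \binom{m}{2}$ there exists a constant $c>0$ such that $h_2(n,m,f) > c\, n^{1/(m-1)}$ for all $n\ge 1$. That is, every $n$-vertex graph $G$ that contains no induced subgraph with exactly $m$ vertices and exactly $f$ edges has a clique or an independent set of size greater than $c\,n^{1/(m-1)}$.
   Context: For an $r$-uniform hypergraph ($r$-graph) $H$, a homogeneous set is a set of vertices that is either a clique (every $r$-subset is an edge) or a coclique (no $r$-subset is an edge); $h(H)$ denotes the size of a largest homogeneous set. An $(m,f)$-graph is an $r$-graph with $m$ vertices and $f$ edges; $H$ is $(m,f)$-free if it contains no induced sub-hypergraph that is an $(m,f)$-graph. For a set $Q$ of pairs $(m,f)$, $H$ is $Q$-free if it is $(m,f)$-free for every $(m,f)\in Q$. $h_r(n,Q)$ is the minimum of $h(H)$ over all $n$-vertex $Q$-free $r$-graphs $H$, and $h_r(n,m,f)=h_r(n,\{(m,f)\})$. A 2-graph is a graph. *)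

From mathcomp Require Import all_boot.
From Stdlib Require Import Reals.
Set Implicit Arguments. Unset Strict Implicit. Unset Printing Implicit Defensive.

Definition simple_graph (T : finType) (e : rel T) : Prop :=
  (forall x y, e x y = e y x) /\ (forall x, ~~ e x x).

Definition is_clique (T : finType) (e : rel T) (S : {set T}) : Prop :=
  forall x y, x \in S -> y \in S -> x != y -> e x y.

Definition is_coclique (T : finType) (e : rel T) (S : {set T}) : Prop :=
  forall x y, x \in S -> y \in S -> x != y -> ~~ e x y.

Definition homogeneous (T : finType) (e : rel T) (S : {set T}) : Prop :=
  is_clique e S \/ is_coclique e S.

Definition num_edges (T : finType) (e : rel T) (S : {set T}) : nat :=
  #|[set A : {set T} | (A \subset S) && (#|A| == 2)
                       && [exists x in A, exists y in A, e x y]]|.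

Definition has_induced_mf (T : finType) (e : rel T) (m f : nat) : Prop :=
  exists S : {set T}, #|S| = m /\ num_edges e S = f.

Definition mf_free (T : finType) (e : rel T) (m f : nat) : Prop :=
  ~ has_induced_mf e m f.

(** Fix [k >= 1]. A graph on at least [k ^ (m-1)] vertices has a homogeneous
    set of size [k] or an induced [(m, f)]-graph for every [f <= 'C(m, 2)].
    Induct on [m]: if [f <= 'C(m-1, 2)], take a vertex [v] with at least
    [k ^ (m-2)] non-neighbours, find an induced [(m-1, f)]-graph among them
    and add [v] as an isolated vertex; otherwise [f - (m-1) <= 'C(m-1, 2)] and
    [v] is taken with many neighbours and added as a dominating vertex.  If no
    such [v] exists, all (non-)degrees are below [k ^ (m-2)] and a greedy
    choice gives a clique (resp. coclique) of size [k].  For [k] the integer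
    part of [n ^ (1/(m-1))] we have [n ^ (1/(m-1)) < k + 1 <= 2 k], so
    [c = 1/2] works. *)

From mathcomp Require Import all_boot.
From Stdlib Require Import Reals Lra.
From mathcomp Require Import zify.
Import ssrnat.
Set Implicit Arguments. Unset Strict Implicit. Unset Printing Implicit Defensive.

Section Greedy.

Variables (T : finType) (r : rel T).
Hypothesis r_sym : forall x y, r x y = r y x.

Lemma coclique_of_small_degree d k (U : {set T}) : 0 < d -> k * d <= #|U| ->
  (forall v, v \in U -> #|[set u in U | r v u]| < d) ->
  exists2 S : {set T}, S \subset U & is_coclique r S /\ k <= #|S|.
Proof.
move=> d_gt0; elim: k U => [|k IH] U hU hdeg.
  by exists set0; [apply: sub0set | split=> // x y; rewrite inE].
have /set0Pn [v vU] : U != set0 by rewrite -card_gt0; move: hU; rewrite mulSn; lia.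
set N := [set u in U | r v u]; set U' := U :\: (v |: N).
have hU' : k * d <= #|U'|.
  have : #|U :&: (v |: N)| <= d.
    apply: leq_trans (subset_leq_card (subsetIr _ _)) _.
    by rewrite cardsU1; have := hdeg v vU; rewrite -/N; case: (v \in N) => /=; lia.
  by move: hU; rewrite /U' cardsD mulSn; lia.
have sU'U : U' \subset U by apply: subsetDl.
have [S sSU' [coS kS]] : exists2 S : {set T}, S \subset U' & is_coclique r S /\ k <= #|S|.
  apply: IH => // w wU'; apply: leq_ltn_trans (hdeg w (subsetP sU'U w wU')).
  apply: subset_leq_card; apply/subsetP => u; rewrite !inE.
  by case/andP=> /andP[_ ->] ->.
have notr_v u : u \in S -> ~~ r v u.
  by move/(subsetP sSU'); rewrite !inE negb_or => /andP[/andP[_]]; case: (u \in U).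
have vS : v \notin S by apply/negP => /(subsetP sSU'); rewrite !inE eqxx.
exists (v |: S); last split.
- by rewrite subUset sub1set vU (subset_trans sSU').
- move=> x y; rewrite !inE => /predU1P[->|xS] /predU1P[->|yS]; rewrite ?eqxx //.
  + by move=> _; apply: notr_v.
  + by move=> _; rewrite r_sym; apply: notr_v.
  + exact: coS.
- by rewrite cardsU1 vS.
Qed.

Lemma large_degree_or_coclique d k (U : {set T}) : 0 < d -> k * d <= #|U| ->
  (exists2 v, v \in U & d <= #|[set u in U | r v u]|) \/
  (exists2 S : {set T}, S \subset U & is_coclique r S /\ k <= #|S|).
Proof.
move=> d_gt0 hU.
have [/existsP[v /andP[vU hv]]|] := boolP [exists v in U, d <= #|[set u in U | r v u]|].
  by left; exists v.
rewrite negb_exists_in => /forallP small; right.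
apply: (coclique_of_small_degree d_gt0 hU) => v vU.
by have := small v; rewrite vU ltnNge.
Qed.

End Greedy.

Lemma num_edges_set1 (T : finType) (e : rel T) x : num_edges e [set x] = 0.
Proof.
apply/eqP; rewrite cards_eq0; apply/eqP/setP => A; rewrite !inE.
apply/negP => /andP[/andP[sA /eqP cA] _].
by have := subset_leq_card sA; rewrite cards1 cA.
Qed.

Definition edge_pairs (T : finType) (e : rel T) (S : {set T}) : {set {set T}} :=
  [set A : {set T} | (A \subset S) && (#|A| == 2)
                     && [exists x in A, exists y in A, e x y]].

Section EdgePairs.

Variables (T : finType) (e : rel T).
Hypothesis e_simple : simple_graph e.

Lemma edge_pairs2 x y : ([set x; y] \in edge_pairs e [set x; y]) = e x y.
Proof.
have [esym eirr] := e_simple; rewrite inE subxx /=.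
have [<-|xy] := eqVneq x y; first by rewrite setUid cards1 (negbTE (eirr x)).
rewrite cards2 xy /=; apply/existsP/idP => [[a]|exy]; last first.
  by exists x; rewrite !inE eqxx /=; apply/existsP; exists y; rewrite !inE eqxx orbT.
by rewrite !inE => /andP[/predU1P[->|/eqP->]] /existsP[b];
  rewrite !inE => /andP[/predU1P[->|/eqP->]]; rewrite ?(negbTE (eirr _)) // esym.
Qed.

Lemma edge_pairsU1 v (S : {set T}) : v \notin S ->
  edge_pairs e (v |: S) =
    edge_pairs e S :|: [set [set v; u] | u in [set u in S | e v u]].
Proof.
move=> vS; apply/setP => A; rewrite in_setU; apply/idP/orP.
- rewrite inE => /andP[/andP[sA cA] ex].
  case vA: (v \in A); last first.
    left; rewrite inE -andbA; apply/and3P; split=> //; apply/subsetP => a aA.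
    by move: (subsetP sA a aA) vA; rewrite !inE => /predU1P[<-|//]; rewrite aA.
  have := cA; rewrite (cardsD1 v) vA => /eqP[] /eqP /cards1P[u hu].
  have hAu : A = [set v; u] by rewrite -(setD1K vA) hu.
  have uS : u \in S.
    have : u \in A :\ v by rewrite hu set11.
    by rewrite !inE => /andP[uv /(subsetP sA)]; rewrite !inE (negbTE uv).
  right; apply/imsetP; exists u => //; rewrite inE uS -(edge_pairs2 v u) -hAu.
  by rewrite /= /edge_pairs inE subxx cA ex.
- case=> [|/imsetP[u]]; first by rewrite !inE => /andP[/andP[sA ->] ->];
    rewrite (subset_trans sA) ?subsetUr.
  rewrite inE => /andP[uS evu] ->; move: evu; rewrite -edge_pairs2 !inE.
  by case/andP=> /andP[_ ->] ->; rewrite subUset !sub1set !inE eqxx uS orbT.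
Qed.

Lemma num_edgesU1 v (S : {set T}) : v \notin S ->
  num_edges e (v |: S) = num_edges e S + #|[set u in S | e v u]|.
Proof.
move=> vS; rewrite /num_edges -!/(edge_pairs _ _) edge_pairsU1 // cardsU.
have inj : {in [set u in S | e v u] &, injective (fun u => [set v; u])}.
  move=> u1 u2; rewrite !inE => /andP[u1S _] _ eq12.
  have : u1 \in [set v; u2] by rewrite -eq12 !inE eqxx orbT.
  by rewrite !inE => /predU1P[hv|/eqP //]; move: vS; rewrite -hv u1S.
rewrite (card_in_imset inj).
suff -> : #|edge_pairs e S :&: [set [set v; u] | u in [set u in S | e v u]]| = 0.
  by rewrite subn0.
apply/eqP; rewrite cards_eq0; apply/eqP/setP => A; rewrite /edge_pairs !inE.
apply/negP => /andP[/andP[/andP[sA _] _] /imsetP[u _ hAu]].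
by move: vS; rewrite (subsetP sA) // hAu !inE eqxx.
Qed.

End EdgePairs.

(** [adj_eq e true] is [e] itself and [adj_eq e false] is the complement of
    [e]; treating both at once lets one argument add either an isolated or a
    dominating vertex. *)
Definition adj_eq (T : finType) (e : rel T) (b : bool) : rel T :=
  [rel x y | (x != y) && (e x y == b)].

Section AdjEq.

Variables (T : finType) (e : rel T).
Hypothesis e_simple : simple_graph e.

Lemma adj_eq_irr b x : adj_eq e b x x = false.
Proof. by rewrite /adj_eq /= eqxx. Qed.

Lemma adj_eq_sym b x y : adj_eq e b x y = adj_eq e b y x.
Proof. by rewrite /adj_eq /= eq_sym (proj1 e_simple). Qed.

Lemma coclique_adj_eq_homogeneous b (S : {set T}) :
  is_coclique (adj_eq e b) S -> homogeneous e S.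
Proof.
move=> coS; case: b coS => coS; [right | left] => x y xS yS xy;
  by have := coS x y xS yS xy; rewrite /adj_eq /= xy /=; case: (e x y).
Qed.

Lemma num_edges_add_vertex b v (S : {set T}) :
  (forall u, u \in S -> adj_eq e b v u) ->
  num_edges e (v |: S) = num_edges e S + b * #|S|.
Proof.
move=> adjS.
have vS : v \notin S by apply/negP => /adjS; rewrite adj_eq_irr.
rewrite num_edgesU1 //; congr (_ + _).
have -> : [set u in S | e v u] = if b then S else set0.
  case: b adjS => adjS; apply/setP => u; rewrite !inE; case uS: (u \in S) => //=;
  by have := adjS u uS; rewrite /adj_eq /= => /andP[_ /eqP->].
by case: b adjS => _; rewrite ?cards0 /= ?mul1n.
Qed.

End AdjEq.

Lemma homogeneous_or_induced (T : finType) (e : rel T) k : simple_graph e -> 0 < k ->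
  forall m f, f <= 'C(m.+1, 2) -> forall U : {set T}, k ^ m <= #|U| ->
  (exists2 S : {set T}, S \subset U & homogeneous e S /\ k <= #|S|) \/
  (exists2 S : {set T}, S \subset U & #|S| = m.+1 /\ num_edges e S = f).
Proof.
move=> e_simple k_gt0 m; elim: m => [|m IH] f hf U hU.
  have /set0Pn [x xU] : U != set0 by rewrite -card_gt0; move: hU; rewrite expn0.
  right; exists [set x]; first by rewrite sub1set.
  by rewrite cards1 num_edges_set1; move: hf; rewrite bin_small //; case: f.
(* [b] says whether the new vertex must be joined to the [m.+1] others. *)
set b := 'C(m.+1, 2) < f.
have [hg hf_split] : f - b * m.+1 <= 'C(m.+1, 2) /\ f = f - b * m.+1 + b * m.+1.
  have hC : 'C(m.+2, 2) = 'C(m.+1, 2) + m.+1 by rewrite binS bin1.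
  have hCm : m <= 'C(m.+1, 2) by rewrite binS bin1 leq_addl.
  by rewrite /b; case: ltnP => /=; lia.
have kmU : k * k ^ m <= #|U| by rewrite -expnS.
have km_gt0 : 0 < k ^ m by rewrite expn_gt0 k_gt0.
have [[v vU hv] | [S sSU [coS kS]]] :=
  large_degree_or_coclique (adj_eq_sym e_simple b) km_gt0 kmU; last first.
  by left; exists S => //; split=> //; apply: coclique_adj_eq_homogeneous coS.
have sNU : [set u in U | adj_eq e b v u] \subset U.
  by apply/subsetP => u; rewrite inE => /andP[].
have [[S sSN hS] | [S sSN [cS eS]]] := IH _ hg _ hv.
  by left; exists S => //; apply: subset_trans sNU.
right; exists (v |: S); first by rewrite subUset sub1set vU (subset_trans sSN).
have adjS u : u \in S -> adj_eq e b v u by move/(subsetP sSN); rewrite inE => /andP[].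
have vS : v \notin S by apply/negP => /adjS; rewrite adj_eq_irr.
by rewrite cardsU1 vS cS (num_edges_add_vertex e_simple adjS) eS cS -hf_split.
Qed.

Lemma nat_root_bounds p n : 0 < p -> 0 < n ->
  exists2 k, 0 < k & k ^ p <= n < k.+1 ^ p.
Proof.
move=> p_gt0; elim: n => [//|n IH] _.
have [->|n_gt0] := posnP n.
  by exists 1 => //; rewrite exp1n leqnn /= -{1}(exp1n p) ltn_exp2r.
have [k k_gt0 /andP[lo hi]] := IH n_gt0.
have [hk1|lt] := leqP (k.+1 ^ p) n.+1; last by exists k => //; lia.
exists k.+1 => //; have : k.+1 ^ p < k.+2 ^ p by rewrite ltn_exp2r.
by lia.
Qed.

Lemma natpowE a b : Nat.pow a b = a ^ b.
Proof. by elim: b => [|b IH] //=; rewrite expnS IH. Qed.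

Lemma Rpower_root_lt n p k : 0 < p -> 0 < n -> n < k ^ p ->
  (Rpower (INR n) (1 / INR p) < INR k)%R.
Proof.
move=> p_gt0 n_gt0 hn.
have hp : (0 < INR p)%R by apply: lt_0_INR; apply/ltP.
have hn0 : (0 < INR n)%R by apply: lt_0_INR; apply/ltP.
have k_gt0 : 0 < k by case: k hn => //; rewrite exp0n //; lia.
have hk : (0 < INR k)%R by apply: lt_0_INR; apply/ltP.
have hlt : (INR n < Rpower (INR k) (INR p))%R.
  by rewrite Rpower_pow // -pow_INR; apply: lt_INR; apply/ltP; rewrite natpowE.
have := Rlt_Rpower_l (INR n) _ (1 / INR p) _ (conj hn0 hlt).
rewrite Rpower_mult (_ : INR p * (1 / INR p) = 1)%R ?Rpower_1 //; last by field; lra.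
by apply; apply: Rdiv_lt_0_compat; lra.
Qed.

Theorem mainTheorem1 :
  forall m f : nat, 2 <= m -> f <= 'C(m, 2) ->
  exists c : R, (0 < c)%R /\
    forall (n : nat), 1 <= n ->
    forall (T : finType) (e : rel T),
      #|T| = n -> simple_graph e -> mf_free e m f ->
      exists S : {set T}, homogeneous e S /\
        (c * Rpower (INR n) (1 / INR (m - 1)) < INR #|S|)%R.
Proof.
move=> m f hm hf; exists (/2)%R; split; first lra.
move=> n hn T e hT e_simple hfree.
have p_gt0 : 0 < m - 1 by lia.
have m_eq : m = (m - 1).+1 by lia.
have [k k_gt0 /andP[lo hi]] := nat_root_bounds p_gt0 hn.
have hU : k ^ (m - 1) <= #|[set: T]| by rewrite cardsT hT.
rewrite m_eq in hf.
have [[S _ [hS kS]] | [S _ [cS eS]]] := homogeneous_or_induced e_simple k_gt0 hf hU.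
- exists S; split=> //.
  have := Rpower_root_lt p_gt0 hn hi.
  have : (1 <= INR k <= INR #|S|)%R.
    by split; [apply: (le_INR 1) | apply: le_INR]; apply/leP.
  by rewrite S_INR; lra.
- by case: hfree; exists S; rewrite cS -m_eq.
Qed.
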